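(* Let $P$ be a program and $M$ a memory model, and assume every execution graph $G$ with $\mathrm{cons}_M^P(G)$ satisfies $\mathit{BE}(G)$. Then there exists $b\in\mathbb N$ such that for every execution graph $G$ with $\mathrm{cons}_M^P(G)$, $\bigl|\{(T,t)\mid T\in\mathcal T,\ t<N_G^T,\ e_G^T(t)\text{ is a write event}\}\bigr|\le b.$
   Context: Programs. There are finite sets $\mathit{Register}$, $\mathit{Value}$, $\mathit{Location}$; $\mathit{State}=\mathit{Register}\to\mathit{Value}$; an update is a partial map $\mathit{Register}\rightharpoonup\mathit{Value}$, and $(\sigma\ll\mu)(r)=\mu(r)$ if $r\in\mathrm{Dom}(\mu)$, else $\sigma(r)$. Events are reads $R^m(x)$, writes $W^m(x,v)$, fences $F^m$, error $E$. A program $P$ consists of a finite set $\mathcal T$ of threads, each $T$ with a finite statement sequence $P_T(0),\dots,P_T(|P_T|-1)$. A statement is $\mathtt{step}(\epsilon,\delta)$ with $\epsilon:\mathit{State}\to\mathit{Event}$, $\delta:\mathit{State}\times(\mathit{Value}\cup\{\bot\})\to\mathit{Update}$, or $\mathtt{await}(n,\kappa)$ with $n\in\mathbb N$, $\kappa:\mathit{State}\to\{0,1\}$. Syntactic restriction: if $P_T(k)=\mathtt{await}(n,\cdot)$ then $n\le k$ and no $P_T(k')$ with $k'\in[k-n:k)$ is an await. ($[a:b)=\{a,\dots,b-1\}$.) An execution graph $G$ has a set $G.\mathrm E$ of triples $\langle T,t,e\rangle$, a partial reads-from map $G.\mathrm{rf}$ from reads to writes, and a modification order $G.\mathrm{mo}$.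 Thread-local semantics: $k_G^T(0)=0$, $\sigma_G^T(0)$ fixed; if $k_G^T(t)\ge|P_T|$ or no triple $\langle T,t,\cdot\rangle$ is in $G.\mathrm E$, execution stops ($N_G^T=t$). Otherwise with $S=P_T(k_G^T(t))$: $e_G^T(t)=\epsilon(\sigma_G^T(t))$ for $S=\mathtt{step}(\epsilon,\cdot)$, $F^{\mathrm{rlx}}$ for an await; $v_G^T(t)$ is the value of the write that $G.\mathrm{rf}$ assigns to $\langle T,t,e_G^T(t)\rangle$ if this is a read with defined rf, else $\bot$. For a step: $k_G^T(t+1)=k_G^T(t)+1$; if $e_G^T(t)$ is a read with $v_G^T(t)=\bot$ then $N_G^T=t+1$, $\sigma_G^T(t+1)=\sigma_G^T(t)$, else $\sigma_G^T(t+1)=\sigma_G^T(t)\ll\delta(\sigma_G^T(t),v_G^T(t))$. For $\mathtt{await}(n,\kappa)$: $\sigma_G^T(t+1)=\sigma_G^T(t)$ and $k_G^T(t+1)=k_G^T(t)+1$ if $\kappa(\sigma_G^T(t))=0$, else $k_G^T(t)-n$. $\mathrm{cons}^P(G)$ holds iff $G.\mathrm E=\{\langle T,t,e_G^T(t)\rangle\mid T\in\mathcal T,\ t<N_G^T\}$; $\mathrm{cons}_M$ is an arbitrary fixed predicate on graphs and $\mathrm{cons}_M^P(G)=\mathrm{cons}^P(G)\wedge\mathrm{cons}_M(G)$. Awaits: $\mathit{end}_G^T(0)<\mathit{end}_G^T(1)<\cdots$ enumerate the steps $t$ at which $P_T(k_G^T(t))$ is an await; $\mathit{len}_G^T(q)=n$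 where $P_T(k_G^T(\mathit{end}_G^T(q)))=\mathtt{await}(n,\kappa)$; $\mathit{start}_G^T(q)=\mathit{end}_G^T(q)-\mathit{len}_G^T(q)$; $\mathit{fail}_G^T(q)$ iff $\kappa(\sigma_G^T(\mathit{end}_G^T(q)))=1$. Bounded effect. $\delta_G^T(t)=\delta(\sigma_G^T(t),v_G^T(t))$ if $P_T(k_G^T(t))=\mathtt{step}(\cdot,\delta)$ and not ($e_G^T(t)$ is a read and $v_G^T(t)=\bot$); otherwise the empty update. $\mathit{vis}_G^T(t,u)=\mathrm{Dom}(\delta_G^T(t))\setminus\bigcup_{t<u'<u}\mathrm{Dom}(\delta_G^T(u'))$. $F(\mathtt{step}(\epsilon,\delta))=\{\epsilon,\delta\}$, $F(\mathtt{await}(n,\kappa))=\{\kappa\}$. A function $f$ depends on $R\subseteq\mathit{Register}$ iff there are states $\sigma,\sigma'$ agreeing outside $R$ with $f(\sigma)\neq f(\sigma')$ (for $f=\delta$: $\delta(\sigma,v)\neq\delta(\sigma',v)$ for some $v$). Step $t$ of $T$ register-reads-from to step $u$ ($t\to_{\mathrm{rrf}}u$) iff $u\ge t$ and some $f\in F(P_T(k_G^T(u)))$ depends on $\mathit{vis}_G^T(t,u)$. $\mathit{BE}(G)$ holds iff for all $T$, all $q$ with $\mathit{fail}_G^T(q)$ and all $t\in[\mathit{start}_G^T(q):\mathit{end}_G^T(q))$: $e_G^T(t)$ is not a write, and $t\to_{\mathrm{rrf}}u$ implies $u\in[\mathit{start}_G^T(q):\mathit{end}_G^T(q))$. *)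

From mathcomp Require Import all_boot.
Set Implicit Arguments.
Unset Strict Implicit.
Unset Printing Implicit Defensive.

(* Access modes (C11-style); only [Mrlx] is referenced by the semantics. *)
Inductive Mode := Mna | Mrlx | Macq | Mrel | Macqrel | Msc.

Section Semantics.
Variables (Reg Val Loc Thread : finType).

Inductive Event :=
  | ERead  (m : Mode) (x : Loc)
  | EWrite (m : Mode) (x : Loc) (v : Val)
  | EFence (m : Mode)
  | EError.

Definition is_read (e : Event) : bool := if e is ERead _ _ then true else false.
Definition is_write (e : Event) : bool := if e is EWrite _ _ _ then true else false.
Definition write_val (e : Event) : option Val :=
  if e is EWrite _ _ v then Some v else None.

Definition State := Reg -> Val.
Definition Update := Reg -> option Val.
Definition empty_update : Update := fun _ => None.
Definition upd (s : State) (mu : Update) : State :=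
  fun r => if mu r is Some v then v else s r.

(* option Val = Value ∪ {⊥}, with None = ⊥ *)
Inductive Stmt :=
  | Step (eps : State -> Event) (delta : State -> option Val -> Update)
  | Await (n : nat) (kappa : State -> bool).

Record program := Program {
  prog : Thread -> seq Stmt;
  init : Thread -> State
}.

Definition stmt_at (P : program) (T : Thread) (k : nat) : option Stmt :=
  nth None (map Some (prog P T)) k.

Definition is_await (S : option Stmt) : bool :=
  if S is Some (Await _ _) then true else false.

Definition wf_program (P : program) : Prop :=
  forall T k n kappa, stmt_at P T k = Some (Await n kappa) ->
    n <= k /\ (forall k', k - n <= k' < k -> ~~ is_await (stmt_at P T k')).

Definition Triple := (Thread * nat * Event)%type.

Record graph := Graph {
  gE  : Thread -> nat -> Event -> Prop;
  grf : Triple -> option Triple;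
  gmo : Triple -> Triple -> Prop
}.

Definition wf_graph (G : graph) : Prop :=
  forall a b : Triple, grf G a = Some b ->
    gE G a.1.1 a.1.2 a.2 /\ gE G b.1.1 b.1.2 b.2 /\ is_read a.2 /\ is_write b.2.

Variables (P : program) (G : graph).

Definition val_of (T : Thread) (t : nat) (e : Event) : option Val :=
  if is_read e then
    (if grf G (T, t, e) is Some w then write_val w.2 else None)
  else None.

Definition ev_of (T : Thread) (k : nat) (s : State) : Event :=
  match stmt_at P T k with
  | Some (Step eps _) => eps s
  | Some (Await _ _) => EFence Mrlx
  | None => EError
  end.

(* (k_G^T(t), sigma_G^T(t)), computed for all t (only meaningful for t < N_G^T) *)
Fixpoint cfg (T : Thread) (t : nat) : nat * State :=
  match t with
  | 0 => (0, init P T)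
  | t'.+1 =>
    let (k, s) := cfg T t' in
    match stmt_at P T k with
    | Some (Step eps delta) =>
        let e := eps s in
        let v := val_of T t' e in
        (k.+1, if is_read e && (v == None) then s else upd s (delta s v))
    | Some (Await n kappa) => (if kappa s then k - n else k.+1, s)
    | None => (k, s)
    end
  end.

Definition kk (T : Thread) (t : nat) : nat := (cfg T t).1.
Definition sigma (T : Thread) (t : nat) : State := (cfg T t).2.
Definition ev (T : Thread) (t : nat) : Event := ev_of T (kk T t) (sigma T t).
Definition vv (T : Thread) (t : nat) : option Val := val_of T t (ev T t).

(* execution of T stops at step u (i.e. N_G^T <= u) *)
Definition stops (T : Thread) (u : nat) : Prop :=
  size (prog P T) <= kk T u
  \/ ~ (exists e, gE G T u e)
  \/ (exists s, u = s.+1 /\ is_read (ev T s) /\ vv T s = None).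

(* t < N_G^T *)
Definition active (T : Thread) (t : nat) : Prop :=
  forall u, u <= t -> ~ stops T u.

Definition consP : Prop :=
  forall T t e, gE G T t e <-> (active T t /\ e = ev T t).

Definition delta_at (T : Thread) (t : nat) : Update :=
  match stmt_at P T (kk T t) with
  | Some (Step _ delta) =>
      if is_read (ev T t) && (vv T t == None) then empty_update
      else delta (sigma T t) (vv T t)
  | _ => empty_update
  end.

Definition vis (T : Thread) (t u : nat) (r : Reg) : Prop :=
  delta_at T t r <> None /\
  (forall u', t < u' < u -> delta_at T u' r = None).

Definition agree_outside (R : Reg -> Prop) (s s' : State) : Prop :=
  forall r, ~ R r -> s r = s' r.

Definition depends_st {A : Type} (f : State -> A) (R : Reg -> Prop) : Prop :=
  exists s s', agree_outside R s s' /\ f s <> f s'.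

Definition depends_delta (delta : State -> option Val -> Update)
    (R : Reg -> Prop) : Prop :=
  exists s s' v, agree_outside R s s' /\ exists r, delta s v r <> delta s' v r.

Definition depends_stmt (St : Stmt) (R : Reg -> Prop) : Prop :=
  match St with
  | Step eps delta => depends_st eps R \/ depends_delta delta R
  | Await _ kappa => depends_st kappa R
  end.

Definition rrf (T : Thread) (t u : nat) : Prop :=
  t <= u /\
  (if stmt_at P T (kk T u) is Some St then depends_stmt St (vis T t u) else False).

(* BE(G): quantifying over the await steps end = end_G^T(q) directly *)
Definition BE : Prop :=
  forall T (tend n : nat) (kappa : State -> bool),
    active T tend ->
    stmt_at P T (kk T tend) = Some (Await n kappa) ->
    kappa (sigma T tend) ->
    forall t, tend - n <= t < tend ->
      ~~ is_write (ev T t) /\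
      (forall u, active T u -> rrf T t u -> tend - n <= u < tend).

End Semantics.

Definition consMP (Reg Val Loc Thread : finType)
    (P : program Reg Val Loc Thread) (consM : graph Val Loc Thread -> Prop)
    (G : graph Val Loc Thread) : Prop :=
  consP P G /\ consM G.

From mathcomp Require Import all_boot.
From mathcomp Require Import zify.

Set Implicit Arguments.
Unset Strict Implicit.
Unset Printing Implicit Defensive.

(** Let a write be executed at step [t1] with program counter [k].  From then
    on the counter advances by one per step until an await fails.  If the
    window of that await reaches back to step [t1], [BE] forbids the write
    inside it; otherwise the jump lands at the window start [a - n > k].  As no
    await lies inside a window, the counter never drops below such a start
    again.  So it stays above [k] after [t1]: each thread performs at most one
    write per program position, at most [#|Thread| * max_T |P_T|] in total. *)

Section NoRepeatedWrites.

Variables (Reg Val Loc Thread : finType).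
Variables (P : program Reg Val Loc Thread) (G : graph Val Loc Thread).
Implicit Types (T : Thread) (t : nat).

Lemma kkS T t :
  kk P G T t.+1 =
    match stmt_at P T (kk P G T t) with
    | Some (Step _ _) => (kk P G T t).+1
    | Some (Await n kappa) =>
        if kappa (sigma P G T t) then kk P G T t - n else (kk P G T t).+1
    | None => kk P G T t
    end.
Proof.
rewrite /kk /sigma /=; case: (cfg P G T t) => k s /=.
by case: (stmt_at P T k) => [[eps d|n kappa]|] //=; case: (kappa s).
Qed.

Lemma stmt_atTE T k : stmt_at P T k = (k < size (prog P T)) :> bool.
Proof. by rewrite /stmt_at -onthE onthTE. Qed.

Lemma active_le T t u : active P G T t -> u <= t -> active P G T u.
Proof. by move=> act_t le_ut v le_vu; apply: act_t; apply: leq_trans le_ut. Qed.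

Lemma active_kk_ltn_size T t : active P G T t -> kk P G T t < size (prog P T).
Proof.
move=> /(_ t (leqnn t)) not_stop; rewrite ltnNge.
by apply/negP => ?; apply: not_stop; left.
Qed.

Lemma write_not_await T t :
  is_write (ev P G T t) -> ~~ is_await (stmt_at P T (kk P G T t)).
Proof. by rewrite /ev /ev_of; case: stmt_at => [[]|]. Qed.

Hypothesis P_wf : wf_program P.

Lemma await_start_leq_kkS T a n kappa t :
  stmt_at P T a = Some (Await Loc n kappa) ->
  a - n <= kk P G T t -> a - n <= kk P G T t.+1.
Proof.
move=> await_a le_start; rewrite kkS.
case stmt_k: (stmt_at P T (kk P G T t)) => [[eps d|m kappa']|] //; first exact: leqW.
case: (kappa' _); last exact: leqW.
have [lt_ka | lt_ak | eq_ka] := ltngtP (kk P G T t) a.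
- have [_ /(_ (kk P G T t))] := P_wf await_a.
  by rewrite le_start lt_ka stmt_k => /(_ isT).
- have [_ /(_ a)] := P_wf stmt_k; rewrite await_a lt_ak andbT.
  by case: leqP => [_ /(_ isT)|]; [|lia].
- by move: stmt_k; rewrite eq_ka await_a => -[-> _].
Qed.

Hypothesis G_BE : BE P G.

Lemma kk_after_write T t1 d :
  is_write (ev P G T t1) -> active P G T (t1 + d) ->
  kk P G T (t1 + d) = kk P G T t1 + d \/
  exists a n kappa, stmt_at P T a = Some (Await Loc n kappa) /\
    kk P G T t1 < a - n <= kk P G T (t1 + d).
Proof.
move=> write_t1; elim: d => [|d IH] act_d; first by left; rewrite !addn0.
have act_pre : active P G T (t1 + d) by apply: active_le act_d _; rewrite addnS.
rewrite !addnS.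
case: (IH act_pre) => [straight | [a [n [kappa [await_a /andP[lt_k le_a]]]]]].
- rewrite kkS straight.
  case stmt_k: (stmt_at P T (kk P G T t1 + d)) => [[eps dl|n kappa]|]; first by left.
  + case fail: (kappa _); last by left.
    have [window_t1 | lt_nd] := leqP d n.
      have lt_0d : 0 < d.
        case: (posnP d) stmt_k => [-> | //]; rewrite addn0 => stmt_k.
        by move: (write_not_await write_t1); rewrite stmt_k.
      have stmt_end : stmt_at P T (kk P G T (t1 + d)) = Some (Await Loc n kappa).
        by rewrite straight.
      have window : t1 + d - n <= t1 < t1 + d by lia.
      have [no_write _] := G_BE act_pre stmt_end fail window.
      by rewrite write_t1 in no_write.
    by right; exists (kk P G T t1 + d), n, kappa; split => //; lia.
  + have := active_kk_ltn_size act_pre.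
    by rewrite straight -stmt_atTE stmt_k.
- right; exists a, n, kappa; split => //.
  by rewrite lt_k (await_start_leq_kkS await_a le_a).
Qed.

Lemma write_kk_ltn T t1 t2 :
  is_write (ev P G T t1) -> t1 < t2 -> active P G T t2 -> kk P G T t1 < kk P G T t2.
Proof.
move=> write_t1 lt_t12; rewrite -(subnKC (ltnW lt_t12)) => act_t2.
have [-> | [a [n [kappa [_ /andP[lt_k le_a]]]]]] := kk_after_write write_t1 act_t2.
- by rewrite -addn1 leq_add2l subn_gt0.
- exact: leq_trans lt_k le_a.
Qed.

End NoRepeatedWrites.

Theorem lemma9 (Reg Val Loc Thread : finType)
    (P : program Reg Val Loc Thread)
    (consM : graph Val Loc Thread -> Prop) :
  wf_program P ->
  (forall G : graph Val Loc Thread,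
      wf_graph G -> consMP P consM G -> BE P G) ->
  exists b : nat,
    forall G : graph Val Loc Thread,
      wf_graph G -> consMP P consM G ->
      forall s : seq (Thread * nat),
        uniq s ->
        (forall p, p \in s -> active P G p.1 p.2 /\ is_write (ev P G p.1 p.2)) ->
        size s <= b.
Proof.
move=> P_wf BE_of_cons; pose m := \max_(T : Thread) size (prog P T).
exists (#|Thread| * m) => G G_wf G_cons s s_uniq s_writes.
have G_BE := BE_of_cons G G_wf G_cons.
pose pc (p : Thread * nat) := (p.1, kk P G p.1 p.2).
have pc_inj : {in s &, injective pc}.
  move=> [T t1] [T' t2] /s_writes[act1 w1] /s_writes[act2 w2] [eq_T eq_kk].
  subst T'; congr (_, _).
  have [lt12 | lt21 | //] := ltngtP t1 t2.
  - by have := write_kk_ltn P_wf G_BE w1 lt12 act2; rewrite eq_kk ltnn.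
  - by have := write_kk_ltn P_wf G_BE w2 lt21 act1; rewrite eq_kk ltnn.
have pc_range : {subset map pc s <= [seq (T, k) | T <- enum Thread, k <- iota 0 m]}.
  move=> _ /mapP[[T t] /s_writes[act_t _] ->].
  rewrite allpairs_f ?mem_enum // mem_iota add0n /=.
  exact: leq_trans (active_kk_ltn_size act_t) (leq_bigmax T).
rewrite -(size_map pc); apply: leq_trans (uniq_leq_size _ pc_range) _.
  by rewrite map_inj_in_uniq.
by rewrite size_allpairs size_iota -cardE.
Qed.
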